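(* Let $p\ge1$, $m=2p$, $N\ge0$, and let $\beta(0),\dots,\beta(N)$ be $p\times m$ matrices with $\beta(k)J\beta(k)^*=I_p$. Put $C_k=2K^*\beta(k)^*\beta(k)K-j$, let $W_k$ be the solution of $W_{k+1}(\lambda)-W_k(\lambda)=-\frac{i}{\lambda}jC_kW_k(\lambda)$ with $W_0=I_m$, and $\mathcal W(\lambda)=\{\mathcal W_{ij}(\lambda)\}_{i,j=1}^2=KW_{N+1}(\bar\lambda)^*$ ($p\times p$ blocks). Let $R,Q$ be $p\times p$ matrix functions meromorphic in $\mathbb C_-$, well defined at $\lambda=-i$, with $R(\lambda)^*R(\lambda)+Q(\lambda)^*Q(\lambda)>0$ and $R(\lambda)^*R(\lambda)\le Q(\lambda)^*Q(\lambda)$. Then $\det\big(\mathcal W_{11}(-i)R(-i)+\mathcal W_{12}(-i)Q(-i)\big)\neq0$.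
   Context: $\mathbb C_-$ is the open lower half-plane; $j=\mathrm{diag}(I_p,-I_p)$, $J=\begin{bmatrix}0&I_p\\ I_p&0\end{bmatrix}$, $K=\frac1{\sqrt2}\begin{bmatrix}I_p&-I_p\\ I_p&I_p\end{bmatrix}$. *)

From HB Require Import structures.
From mathcomp Require Import all_boot all_order all_algebra.
From mathcomp Require Import complex.
From mathcomp Require Import all_classical all_reals all_analysis.
Set Implicit Arguments. Unset Strict Implicit. Unset Printing Implicit Defensive.
Import Order.TTheory GRing.Theory Num.Theory.
Import numFieldNormedType.Exports.
Local Open Scope ring_scope.
Local Open Scope classical_set_scope.

Section Defs.
Variable R : realType.
Local Notation C := (R[i]).

Definition adj m n (A : 'M[C]_(m, n)) : 'M[C]_(n, m) := (map_mx conjc A)^T.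

Definition psd n (A : 'M[C]_n) : Prop :=
  adj A = A /\ forall v : 'cV[C]_n, 0 <= (adj v *m A *m v) 0 0.
Definition posdef n (A : 'M[C]_n) : Prop :=
  adj A = A /\ forall v : 'cV[C]_n, v != 0 -> 0 < (adj v *m A *m v) 0 0.

Definition lower_half : set C := [set z | complex.Im z < 0].

Definition holo_at (f : C -> C) (z : C) : Prop :=
  derivable (f : C^o -> C^o) z 1.

(* F : C -> M is meromorphic in the open set U, and P (a subset of U without
   accumulation points in U) contains every point where F fails to be
   holomorphic; each point of P is at most a pole. *)
Definition meromorphic_off m n (U P : set C) (F : C -> 'M[C]_(m, n)) : Prop :=
  [/\ P `<=` U,
      (forall z, U z -> exists2 e : C, 0 < e &
          forall w, P w -> `|w - z| < e -> w = z),
      (forall z, U z -> ~ P z -> forall i j, holo_at (fun w => F w i j) z) &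
      (forall p0, P p0 -> exists k : nat, forall i j,
          cvg ((fun w : C^o => (w - p0) ^+ k * F w i j) @ (p0 : C^o)^'))].

Definition jmx p : 'M[C]_(p + p) := block_mx 1%:M 0 0 (- 1%:M).
Definition Jmx p : 'M[C]_(p + p) := block_mx 0 1%:M 1%:M 0.
Definition Kmx p : 'M[C]_(p + p) :=
  (sqrtC 2)^-1 *: block_mx 1%:M (- 1%:M) 1%:M 1%:M.

Definition Cmx p (beta : nat -> 'M[C]_(p, p + p)) (k : nat) : 'M[C]_(p + p) :=
  2%:R *: (adj (Kmx p) *m adj (beta k) *m beta k *m Kmx p) - jmx p.

Fixpoint Wmx p (beta : nat -> 'M[C]_(p, p + p)) (k : nat) (l : C)
  : 'M[C]_(p + p) :=
  match k with
  | 0 => 1%:M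
  | k'.+1 => Wmx beta k' l
       - ('i / l) *: (jmx p *m Cmx beta k' *m Wmx beta k' l)
  end.

Definition calW p (beta : nat -> 'M[C]_(p, p + p)) (N : nat) (l : C)
  : 'M[C]_(p + p) := Kmx p *m adj (Wmx beta N.+1 (conjc l)).

End Defs.

From HB Require Import structures.
From mathcomp Require Import all_boot all_order all_algebra.
From mathcomp Require Import complex.
From mathcomp Require Import all_classical all_reals all_analysis.
Set Implicit Arguments. Unset Strict Implicit. Unset Printing Implicit Defensive.
Import Order.TTheory GRing.Theory Num.Theory.
Local Open Scope ring_scope.
Local Open Scope classical_set_scope.

(* At [l = -i] we have [conj l = i], so the recursion reads
   [W_{k+1}(i) = (I - j C_k) W_k(i)] and [W_{N+1}(i)^* = (I - C_0 j) ... (I - C_N j)].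
   With [g_k = beta(k) K] one has [g_k j g_k^* = I] and
   [I - C_k j = 2 (I - g_k^* g_k j)]; the map [x |-> x - g_k^* g_k j x] sends a
   nonzero [x] with [x^* j x <= 0] to a nonzero vector with the same property,
   lying in the kernel of [g_k j].  If [c <> 0] is in the kernel of
   [W11 R + W12 Q] at [-i], the hypotheses on [R] and [Q] make [x = col(R, Q) c]
   such a vector, so [u = W_{N+1}(i)^* x] is nonzero, satisfies [g_0 j u = 0],
   and [K u] has zero upper half.  These two linear conditions force [u = 0],
   because [beta(0) J beta(0)^* = I] makes the left block of [beta(0)]
   invertible. *)

Lemma det0_ker (F : fieldType) n (A : 'M[F]_n) :
  \det A = 0 -> exists2 c : 'cV_n, c != 0 & A *m c = 0.
Proof.
move=> /eqP; rewrite -det_tr => /det0P [v vn0 vA].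
exists v^T; first by rewrite -trmx0 (inj_eq trmx_inj).
by rewrite -[A]trmxK -trmx_mul vA trmx0.
Qed.

Lemma mxBE (V : zmodType) m n (A B : 'M[V]_(m, n)) i j :
  (A - B) i j = A i j - B i j.
Proof. by rewrite !mxE. Qed.

Section Adjoint.
Variable R : realType.
Local Notation C := (R[i]).

Lemma adj_mul m n k (A : 'M[C]_(m, n)) (B : 'M[C]_(n, k)) :
  adj (A *m B) = adj B *m adj A.
Proof. by rewrite /adj map_mxM trmx_mul. Qed.

Lemma adjK m n (A : 'M[C]_(m, n)) : adj (adj A) = A.
Proof. by apply/matrixP => i j; rewrite !mxE conjcK. Qed.

Lemma adjB m n (A B : 'M[C]_(m, n)) : adj (A - B) = adj A - adj B.
Proof. by apply/matrixP => i j; rewrite !mxE rmorphB. Qed.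

Lemma adjN m n (A : 'M[C]_(m, n)) : adj (- A) = - adj A.
Proof. by apply/matrixP => i j; rewrite !mxE rmorphN. Qed.

Lemma adjZ m n (c : C) (A : 'M[C]_(m, n)) : adj (c *: A) = c^*%C *: adj A.
Proof. by apply/matrixP => i j; rewrite !mxE rmorphM. Qed.

Lemma adj0 m n : adj (0 : 'M[C]_(m, n)) = 0.
Proof. by apply/matrixP => i j; rewrite !mxE rmorph0. Qed.

Lemma adj1 n : adj (1%:M : 'M[C]_n) = 1%:M.
Proof. by apply/matrixP => i j; rewrite !mxE rmorphMn rmorph1 eq_sym. Qed.

Lemma adj_block_mx m1 m2 n1 n2 (A : 'M[C]_(m1, n1)) (B : 'M[C]_(m1, n2))
  (D : 'M[C]_(m2, n1)) (E : 'M[C]_(m2, n2)) :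
  adj (block_mx A B D E) = block_mx (adj A) (adj D) (adj B) (adj E).
Proof. by rewrite /adj map_block_mx tr_block_mx. Qed.

Lemma adj_col_mx m1 m2 n (A : 'M[C]_(m1, n)) (B : 'M[C]_(m2, n)) :
  adj (col_mx A B) = row_mx (adj A) (adj B).
Proof. by rewrite /adj map_col_mx tr_col_mx. Qed.

Lemma adj_row_mx m n1 n2 (A : 'M[C]_(m, n1)) (B : 'M[C]_(m, n2)) :
  adj (row_mx A B) = col_mx (adj A) (adj B).
Proof. by rewrite /adj map_row_mx tr_row_mx. Qed.

Lemma adj_mulmx_sum n (v : 'cV[C]_n) : (adj v *m v) 0 0 = \sum_i `|v i 0| ^+ 2.
Proof. by rewrite !mxE; apply: eq_bigr => i _; rewrite !mxE normCKC. Qed.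

Lemma adj_mulmx_ge0 n (v : 'cV[C]_n) : 0 <= (adj v *m v) 0 0.
Proof. by rewrite adj_mulmx_sum sumr_ge0 // => i _; rewrite exprn_ge0. Qed.

Lemma adj_mulmx_eq0 n (v : 'cV[C]_n) : (adj v *m v) 0 0 = 0 -> v = 0.
Proof.
rewrite adj_mulmx_sum => /eqP; rewrite psumr_eq0 => [/allP v0|i _]; last first.
  exact: exprn_ge0.
apply/matrixP => i k; rewrite (ord1 k) mxE.
by have /= := v0 i (mem_index_enum i); rewrite sqrf_eq0 normr_eq0 => /eqP.
Qed.

End Adjoint.

Section KernelProjection.
Variables (R : realType) (n q : nat).
Local Notation C := (R[i]).
Variable S : 'M[C]_n.
Hypotheses (adjS : adj S = S) (S2 : S *m S = 1%:M).

Definition nonpos_vec (x : 'cV[C]_n) := x != 0 /\ (adj x *m S *m x) 0 0 <= 0.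

Lemma nonpos_vecMn k x : (0 < k)%N -> nonpos_vec x -> nonpos_vec (k%:R *: x).
Proof.
move=> k_gt0 [xn0 xSx]; split.
  by rewrite scaler_eq0 pnatr_eq0 negb_or -lt0n k_gt0.
rewrite adjZ conjc_nat -!scalemxAl -scalemxAr scalerA mxE.
by rewrite mulr_ge0_le0 // mulr_ge0 ?ler0n.
Qed.

Variable g : 'M[C]_(q, n).
Hypothesis gSg : g *m S *m adj g = 1%:M.

Definition kerproj (x : 'cV[C]_n) := x - adj g *m (g *m S *m x).

Lemma kerprojP x : g *m S *m kerproj x = 0.
Proof. by rewrite mulmxBr !mulmxA gSg mul1mx subrr. Qed.

Lemma kerproj_form x :
  adj (kerproj x) *m S *m kerproj x =
  adj x *m S *m x - adj (g *m S *m x) *m (g *m S *m x).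
Proof.
set w := g *m S *m x.
have xSg : adj x *m S *m adj g = adj w by rewrite !adj_mul adjS mulmxA.
have wgSx : adj w *m g *m S *m x = adj w *m w by rewrite !mulmxA.
have wgSg : adj w *m g *m S *m adj g = adj w.
  by rewrite -!mulmxA (mulmxA g) gSg mulmx1.
rewrite adjB adj_mul adjK !(mulmxBl, mulmxBr) !mulmxA xSg wgSg wgSx.
by rewrite subrr subr0.
Qed.

(* The [w^* w] subtracted by [kerproj] is nonnegative, and if [kerproj x]
   vanished, [x^* S x = w^* w] would force [w = 0], hence [x = 0]. *)
Lemma nonpos_vec_kerproj x : nonpos_vec x -> nonpos_vec (kerproj x).
Proof.
move=> [xn0 xSx]; have := kerproj_form x; set w := g *m S *m x => form_eq.
have [u0|un0] := eqVneq (kerproj x) 0; last first.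
  split=> //; rewrite form_eq mxBE subr_le0.
  by apply: le_trans xSx _; apply: adj_mulmx_ge0.
move: form_eq; rewrite u0 adj0 !mul0mx => /(congr1 (fun M : 'M[C]_1 => M 0 0)).
rewrite mxBE mxE => /eqP; rewrite eq_sym subr_eq0 => /eqP xSx_w.
have w0 : w = 0.
  by apply: adj_mulmx_eq0; apply/eqP; rewrite eq_le adj_mulmx_ge0 -xSx_w xSx.
by move/eqP: u0; rewrite /kerproj -/w w0 mulmx0 subr0 (negbTE xn0).
Qed.

Lemma kerproj_factor x :
  (1%:M - (2%:R *: (adj g *m g) - S) *m S) *m x = 2%:R *: kerproj x.
Proof.
rewrite !mulmxBl mul1mx S2 mul1mx -!scalemxAl /kerproj !mulmxA !scaler_nat.
by rewrite opprB addrA -mulr2n mulrnBl.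
Qed.

End KernelProjection.

Section Signature.
Variables (R : realType) (p : nat).
Local Notation C := (R[i]).
Local Notation j := (jmx R p).
Local Notation K := (Kmx R p).

Lemma adj_jmx : adj j = j.
Proof. by rewrite /jmx adj_block_mx adjN adj1 !adj0. Qed.

Lemma jmxK : j *m j = 1%:M.
Proof.
rewrite /jmx mulmx_block.
rewrite !(mul1mx, mulmx1, mul0mx, mulmx0, addr0, add0r, mulNmx, mulmxN, opprK).
by rewrite -scalar_mx_block.
Qed.

Lemma conj_invsqrt2 : ((sqrtC 2)^-1)^*%C = (sqrtC 2)^-1 :> C.
Proof. by apply: (@conj_Creal C); rewrite rpredV sqrtC_real ?ler0n. Qed.

Lemma invsqrt2_neq0 : (sqrtC 2)^-1 != 0 :> C.
Proof. by rewrite invr_eq0 sqrtC_eq0 pnatr_eq0. Qed.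

Lemma Kmx_jmx_adj : K *m j *m adj K = Jmx R p.
Proof.
rewrite /Kmx /jmx adjZ conj_invsqrt2 adj_block_mx adjN !adj1.
rewrite -!scalemxAl -scalemxAr scalerA !mulmx_block.
rewrite !(mul1mx, mulmx1, mul0mx, mulmx0, addr0, add0r, mulNmx, mulmxN, opprK).
rewrite /Jmx scale_block_mx !subrr !scaler0 -mulr2n -scalerMnr scalerMnl.
by rewrite -mulr_natr -invfM -expr2 sqrtCK mulVf ?pnatr_eq0 // scale1r.
Qed.

Lemma lsubmx_unitmx (b : 'M[C]_(p, p + p)) :
  b *m Jmx R p *m adj b = 1%:M -> lsubmx b \in unitmx.
Proof.
move=> bJb; rewrite unitmxE unitfE; apply/det0P => -[v vn0 vb].
have : v *m (b *m Jmx R p *m adj b) *m adj v = 0.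
  rewrite -[b]hsubmxK /Jmx adj_row_mx mul_row_block mul_row_col.
  rewrite !(mulmx0, mulmx1, add0r, addr0) mulmxDr mulmxDl !mulmxA vb !mul0mx addr0.
  by rewrite -mulmxA -adj_mul vb adj0 mulmx0.
rewrite bJb mulmx1 -{1}[v]adjK => /(congr1 (fun M : 'M[C]_1 => M 0 0)).
rewrite [X in _ = X]mxE => /adj_mulmx_eq0/(congr1 (@adj _ _ _)).
by rewrite adjK adj0 => v0; rewrite v0 eqxx in vn0.
Qed.

(* [K u] has zero upper half exactly when [u = col(a, a)]; then [j u = col(a, -a)]
   and [K j u = sqrt 2 col(a, 0)], so [b K j u = 0] means [lsubmx b *m a = 0]. *)
Lemma Kmx_usubmx_eq0 (b : 'M[C]_(p, p + p)) (u : 'cV[C]_(p + p)) :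
  b *m Jmx R p *m adj b = 1%:M ->
  b *m K *m j *m u = 0 -> usubmx (K *m u) = 0 -> u = 0.
Proof.
move=> bJb bKju Ku0.
have u_sym : usubmx u = dsubmx u.
  move: Ku0; rewrite -[u]vsubmxK /Kmx -scalemxAl mul_block_col scale_col_mx col_mxKu.
  move/eqP; rewrite scaler_eq0 (negbTE invsqrt2_neq0) /= mul1mx mulNmx mul1mx subr_eq0.
  by rewrite col_mxKu col_mxKd => /eqP.
have uE : u = col_mx (usubmx u) (usubmx u) by rewrite {2}u_sym vsubmxK.
set a := usubmx u in uE.
suff a0 : a = 0 by rewrite uE a0 col_mx0.
have ba0 : lsubmx b *m a = 0.
  move: bKju; rewrite uE /Kmx /jmx -!mulmxA mul_block_col -scalemxAl -scalemxAr.
  rewrite mul_block_col !(mul1mx, mul0mx, add0r, addr0, mulNmx, opprK) subrr.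
  rewrite -{1}[b]hsubmxK mul_row_col mulmx0 addr0 mulmxDr.
  move/eqP; rewrite scaler_eq0 (negbTE invsqrt2_neq0) /= -mulr2n -scaler_nat.
  by rewrite scaler_eq0 pnatr_eq0 /= => /eqP.
by rewrite -(mulKmx (lsubmx_unitmx bJb) a) ba0 mulmx0.
Qed.

Lemma jmx_form (a b : 'cV[C]_p) :
  adj (col_mx a b) *m j *m col_mx a b = adj a *m a - adj b *m b.
Proof.
rewrite adj_col_mx /jmx mul_row_block mul_row_col.
by rewrite !(mulmx0, mulmx1, addr0, add0r, mulmxN, mulNmx).
Qed.

Lemma nonpos_vec_col_mx r (Rm Qm : 'M[C]_(p, r)) (c : 'cV[C]_r) :
  posdef (adj Rm *m Rm + adj Qm *m Qm) -> psd (adj Qm *m Qm - adj Rm *m Rm) ->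
  c != 0 -> nonpos_vec j (col_mx Rm Qm *m c).
Proof.
move=> [_ pos] [_ nonneg] cn0.
have form_mul (A : 'M[C]_(p, r)) :
    adj c *m (adj A *m A) *m c = adj (A *m c) *m (A *m c).
  by rewrite adj_mul !mulmxA.
rewrite mul_col_mx; split.
  have := pos c cn0; rewrite mulmxDr mulmxDl !form_mul; apply: contraTneq.
  move/eqP; rewrite col_mx_eq0 => /andP [/eqP -> /eqP ->].
  by rewrite adj0 !mul0mx !addr0 mxE ltxx.
have := nonneg c; rewrite mulmxBr mulmxBl !form_mul jmx_form !mxBE.
by rewrite subr_ge0 subr_le0.
Qed.

End Signature.

Section TransferAtI.
Variables (R : realType) (p N : nat) (beta : nat -> 'M[R[i]]_(p, p + p)).
Hypothesis beta_J : forall k, (k <= N)%N -> beta k *m Jmx R p *m adj (beta k) = 1%:M.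
Local Notation j := (jmx R p).
Local Notation g k := (beta k *m Kmx R p).

Lemma Wmx_iS k : Wmx beta k.+1 'i = (1%:M - j *m Cmx beta k) *m Wmx beta k 'i.
Proof. by rewrite /= divff ?neq0Ci // scale1r mulmxBl mul1mx. Qed.

Lemma CmxE k : Cmx beta k = 2%:R *: (adj (g k) *m g k) - j.
Proof. by rewrite /Cmx adj_mul !mulmxA. Qed.

Lemma adj_Wmx_factor k : adj (1%:M - j *m Cmx beta k) = 1%:M - Cmx beta k *m j.
Proof.
rewrite adjB adj1 adj_mul adj_jmx CmxE adjB adjZ conjc_nat adj_mul adjK adj_jmx.
by rewrite -CmxE.
Qed.

Lemma g_jmx_adj k : (k <= N)%N -> g k *m j *m adj (g k) = 1%:M.
Proof.
move=> kN; rewrite adj_mul -!mulmxA (mulmxA (Kmx R p)) (mulmxA (Kmx R p *m j)).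
by rewrite Kmx_jmx_adj mulmxA beta_J.
Qed.

Lemma nonpos_vec_adj_Wmx n x : (0 < n <= N.+1)%N -> nonpos_vec j x ->
  let u := adj (Wmx beta n 'i) *m x in nonpos_vec j u /\ g 0 *m j *m u = 0.
Proof.
elim: n x => [//|n IH] x /andP [_ nN] xneg.
set y := kerproj j (g n) x.
have yneg : nonpos_vec j (2%:R *: y).
  exact/nonpos_vecMn/nonpos_vec_kerproj/xneg/g_jmx_adj/nN/adj_jmx.
have -> : adj (Wmx beta n.+1 'i) *m x = adj (Wmx beta n 'i) *m (2%:R *: y).
  by rewrite Wmx_iS adj_mul adj_Wmx_factor -mulmxA (CmxE n) kerproj_factor ?jmxK.
have yker : g n *m j *m (2%:R *: y) = 0.
  by rewrite -scalemxAr kerprojP ?scaler0 ?g_jmx_adj.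
move: (2%:R *: y) yneg yker => {y} z zneg.
case: n IH nN => [|n] IH nN zker; first by rewrite /= adj1 mul1mx.
exact: IH (ltnW nN) zneg.
Qed.

End TransferAtI.

Lemma conjc_Ni (R : realType) : conjc (- 'i) = 'i :> R[i].
Proof. by rewrite rmorphN -[RHS]opprK -(conjCi R[i]). Qed.

Theorem proposition5p5 (R : realType) (p : nat) (hp : (0 < p)%N) (N : nat)
  (beta : nat -> 'M[R[i]]_(p, p + p))
  (hbeta : forall k, (k <= N)%N -> beta k *m Jmx R p *m adj (beta k) = 1%:M)
  (Rf Qf : R[i] -> 'M[R[i]]_p) (P : set R[i])
  (hR : meromorphic_off (@lower_half R) P Rf)
  (hQ : meromorphic_off (@lower_half R) P Qf)
  (hreg : ~ P (- 'i))
  (hpos : forall l, @lower_half R l -> ~ P l ->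
            posdef (adj (Rf l) *m Rf l + adj (Qf l) *m Qf l))
  (hle : forall l, @lower_half R l -> ~ P l ->
            psd (adj (Qf l) *m Qf l - adj (Rf l) *m Rf l)) :
  let W := calW beta N (- 'i) in
  \det (ulsubmx W *m Rf (- 'i) + ursubmx W *m Qf (- 'i)) != 0.
Proof.
cbv zeta; have lh : lower_half (- 'i : R[i]) by rewrite /lower_half /= ltrN10.
rewrite -mul_row_col hsubmxK mul_usub_mx; apply/eqP => /det0_ker [c cn0 Wc0].
have xneg := nonpos_vec_col_mx (hpos _ lh hreg) (hle _ lh hreg) cn0.
have [[un0 _] gju] := nonpos_vec_adj_Wmx hbeta (n := N.+1) (leqnn _) xneg.
move/eqP: un0; apply; apply: Kmx_usubmx_eq0 (hbeta 0 (leq0n N)) gju _.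
by move: Wc0; rewrite mul_usub_mx /calW conjc_Ni -!mulmxA.
Qed.
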